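(* Let $\mathcal{A}$ be an Abelian category. Let $L\xrightarrow{\ell_2}M\xleftarrow{r_2}R$ be a cospan with pullback $L\times_MR$ and projections $\ell_1\colon L\times_MR\to L$, $r_1\colon L\times_MR\to R$, and let $f\colon Z\to L\times_MR$ be any morphism. Let $\ell_2^*\colon\operatorname{coker}(\ell_1f)\to\operatorname{coker}(\ell_2\ell_1f)$ and $r_2^*\colon\operatorname{coker}(r_1f)\to\operatorname{coker}(\ell_2\ell_1f)=\operatorname{coker}(r_2r_1f)$ be the induced maps on cokernels. Then the canonical morphism \[u\colon\operatorname{coker}f\to\operatorname{coker}(\ell_1f)\times_{\operatorname{coker}(\ell_2\ell_1f)}\operatorname{coker}(r_1f),\] induced by the maps $\operatorname{coker}f\to\operatorname{coker}(\ell_1f)$ and $\operatorname{coker}f\to\operatorname{coker}(r_1f)$ (induced by $\ell_1$ and $r_1$), is an epimorphism. *)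

Set Implicit Arguments.

Record Category := {
  Ob :> Type;
  Hom : Ob -> Ob -> Type;
  idm : forall A, Hom A A;
  comp : forall A B C, Hom B C -> Hom A B -> Hom A C;
  comp_assoc : forall A B C D (h : Hom C D) (g : Hom B C) (f : Hom A B),
      comp h (comp g f) = comp (comp h g) f;
  comp_id_l : forall A B (f : Hom A B), comp (idm B) f = f;
  comp_id_r : forall A B (f : Hom A B), comp f (idm A) = f
}.

Arguments Hom {c} _ _.
Arguments idm {c} _.
Arguments comp {c A B C} _ _.

Section Defs.
Variable C : Category.

Definition is_mono {A B : C} (m : Hom A B) : Prop :=
  forall X (g h : Hom X A), comp m g = comp m h -> g = h.

Definition is_epi {A B : C} (e : Hom A B) : Prop :=
  forall X (g h : Hom B X), comp g e = comp h e -> g = h.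

Definition is_zero_object (Z : C) : Prop :=
  forall X : C, (exists f : Hom X Z, forall g, g = f) /\
                (exists f : Hom Z X, forall g, g = f).

Definition is_zero_mor {A B : C} (f : Hom A B) : Prop :=
  exists (Z : C) (g : Hom A Z) (h : Hom Z B), is_zero_object Z /\ f = comp h g.

Definition is_kernel {A B K : C} (f : Hom A B) (k : Hom K A) : Prop :=
  is_zero_mor (comp f k) /\
  forall W (g : Hom W A), is_zero_mor (comp f g) ->
    exists! h : Hom W K, comp k h = g.

Definition is_cokernel {A B Q : C} (f : Hom A B) (q : Hom B Q) : Prop :=
  is_zero_mor (comp q f) /\
  forall W (g : Hom B W), is_zero_mor (comp g f) ->
    exists! h : Hom Q W, comp h q = g.

Definition is_product {A B P : C} (p1 : Hom P A) (p2 : Hom P B) : Prop :=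
  forall W (g1 : Hom W A) (g2 : Hom W B),
    exists! h : Hom W P, comp p1 h = g1 /\ comp p2 h = g2.

Definition is_coproduct {A B S : C} (i1 : Hom A S) (i2 : Hom B S) : Prop :=
  forall W (g1 : Hom A W) (g2 : Hom B W),
    exists! h : Hom S W, comp h i1 = g1 /\ comp h i2 = g2.

Definition is_pullback {A B M P : C} (f : Hom A M) (g : Hom B M)
    (p1 : Hom P A) (p2 : Hom P B) : Prop :=
  comp f p1 = comp g p2 /\
  forall W (w1 : Hom W A) (w2 : Hom W B), comp f w1 = comp g w2 ->
    exists! h : Hom W P, comp p1 h = w1 /\ comp p2 h = w2.

Definition is_abelian : Prop :=
  (exists Z : C, is_zero_object Z) /\
  (forall A B : C, exists (P : C) (p1 : Hom P A) (p2 : Hom P B), is_product p1 p2) /\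
  (forall A B : C, exists (S : C) (i1 : Hom A S) (i2 : Hom B S), is_coproduct i1 i2) /\
  (forall (A B : C) (f : Hom A B), exists (K : C) (k : Hom K A), is_kernel f k) /\
  (forall (A B : C) (f : Hom A B), exists (Q : C) (q : Hom B Q), is_cokernel f q) /\
  (forall (A B : C) (m : Hom A B), is_mono m ->
      exists (Q : C) (f : Hom B Q), is_kernel f m) /\
  (forall (A B : C) (e : Hom A B), is_epi e ->
      exists (K : C) (f : Hom K A), is_cokernel f e).

End Defs.

Arguments is_mono {C A B} _.
Arguments is_epi {C A B} _.
Arguments is_zero_object {C} _.
Arguments is_zero_mor {C A B} _.
Arguments is_kernel {C A B K} _ _.
Arguments is_cokernel {C A B Q} _ _.
Arguments is_product {C A B P} _ _.
Arguments is_coproduct {C A B S} _ _.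
Arguments is_pullback {C A B M P} _ _ _ _.

From Stdlib Require Import ClassicalEpsilon.

(* The morphism sets of an abelian category in Freyd's sense carry a canonical
   abelian group structure, so one may chase "generalized elements": a
   morphism T -> X with T arbitrary, where passing to an epimorphic cover
   T' -> T is allowed at every step.  Given an element of the pullback of
   cokernels, lift its two components through the epis [cL] and [cR]; their
   images in [M] differ by an element killed by [cM], hence (after a cover)
   lying in the image of [l2 l1 f].  Correcting the [L]-component by it gives
   an element of the pullback [L x_M R], whose image in [coker f] is mapped by
   [u] onto the cover of the given element. *)

Local Notation "g ∘ f" := (comp g f) (at level 40, left associativity).

Section AbelianCategory.
Context {C : Category} (HC : is_abelian C).

Lemma compA {A B X D : C} (h : Hom X D) (g : Hom B X) (f : Hom A B) :
  h ∘ (g ∘ f) = (h ∘ g) ∘ f.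
Proof. apply comp_assoc. Qed.

Lemma comp_idl {A B : C} (f : Hom A B) : idm B ∘ f = f.
Proof. apply comp_id_l. Qed.

Lemma comp_idr {A B : C} (f : Hom A B) : f ∘ idm A = f.
Proof. apply comp_id_r. Qed.

Lemma epi_comp {A B D : C} (g : Hom B D) (f : Hom A B) :
  is_epi g -> is_epi f -> is_epi (g ∘ f).
Proof. intros Hg Hf X x y E. apply Hg, Hf. rewrite <- !compA. exact E. Qed.

Lemma mono_comp {A B D : C} (g : Hom B D) (f : Hom A B) :
  is_mono g -> is_mono f -> is_mono (g ∘ f).
Proof. intros Hg Hf X x y E. apply Hf, Hg. rewrite !compA. exact E. Qed.

Lemma epi_compl {A B D : C} (g : Hom B D) (f : Hom A B) : is_epi (g ∘ f) -> is_epi g.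
Proof. intros Hgf X x y E. apply Hgf. rewrite !compA, E. reflexivity. Qed.

Lemma split_epi {A B : C} (e : Hom A B) (s : Hom B A) : e ∘ s = idm B -> is_epi e.
Proof.
  intros Es Y g h E. rewrite <- (comp_idr g), <- (comp_idr h), <- Es, !compA, E.
  reflexivity.
Qed.

Lemma split_mono {A B : C} (m : Hom A B) (r : Hom B A) : r ∘ m = idm A -> is_mono m.
Proof.
  intros Er Y g h E. rewrite <- (comp_idl g), <- (comp_idl h), <- Er, <- !compA, E.
  reflexivity.
Qed.

(** * Zero morphisms, kernels and cokernels *)

Lemma ex_zero_object : exists Z : C, is_zero_object Z.
Proof. destruct HC as [H _]. exact H. Qed.

Definition zero_ob : C := proj1_sig (constructive_indefinite_description _ ex_zero_object).

Lemma zero_obP : is_zero_object zero_ob.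
Proof. exact (proj2_sig (constructive_indefinite_description _ ex_zero_object)). Qed.

Lemma to_zero_object_eq {Z : C} (HZ : is_zero_object Z) {A : C} (g h : Hom A Z) : g = h.
Proof. destruct (proj1 (HZ A)) as [f Hf]. rewrite (Hf g), (Hf h). reflexivity. Qed.

Lemma from_zero_object_eq {Z : C} (HZ : is_zero_object Z) {B : C} (g h : Hom Z B) : g = h.
Proof. destruct (proj2 (HZ B)) as [f Hf]. rewrite (Hf g), (Hf h). reflexivity. Qed.

Definition to_zero (A : C) : Hom A zero_ob :=
  proj1_sig (constructive_indefinite_description _ (proj1 (zero_obP A))).

Definition from_zero (B : C) : Hom zero_ob B :=
  proj1_sig (constructive_indefinite_description _ (proj2 (zero_obP B))).

Definition zero (A B : C) : Hom A B := from_zero B ∘ to_zero A.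

Lemma is_zero_morE {A B : C} (f : Hom A B) : is_zero_mor f <-> f = zero A B.
Proof.
  split.
  - intros (Z & g & h & HZ & ->). unfold zero.
    destruct (proj1 (zero_obP Z)) as [phi _].
    rewrite (from_zero_object_eq HZ h (from_zero B ∘ phi)), <- compA.
    f_equal. apply (to_zero_object_eq zero_obP).
  - intros ->. exists zero_ob, (to_zero A), (from_zero B).
    split; [exact zero_obP | reflexivity].
Qed.

Lemma zero_comp {A B D : C} (f : Hom A B) : zero B D ∘ f = zero A D.
Proof. unfold zero. rewrite <- compA. f_equal. apply (to_zero_object_eq zero_obP). Qed.

Lemma comp_zero {A B D : C} (g : Hom B D) : g ∘ zero A B = zero A D.
Proof. unfold zero. rewrite compA. f_equal. apply (from_zero_object_eq zero_obP). Qed.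

Definition is_ker {A B K : C} (f : Hom A B) (k : Hom K A) : Prop :=
  f ∘ k = zero K B /\
  forall W (g : Hom W A), f ∘ g = zero W B -> exists! h : Hom W K, k ∘ h = g.

Definition is_coker {A B Q : C} (f : Hom A B) (q : Hom B Q) : Prop :=
  q ∘ f = zero A Q /\
  forall W (g : Hom B W), g ∘ f = zero A W -> exists! h : Hom Q W, h ∘ q = g.

Lemma kernel_is_ker {A B K : C} {f : Hom A B} {k : Hom K A} : is_kernel f k -> is_ker f k.
Proof.
  intros [H1 H2]. split; [apply is_zero_morE; exact H1|].
  intros W g Hg. apply H2, is_zero_morE. exact Hg.
Qed.

Lemma cokernel_is_coker {A B Q : C} {f : Hom A B} {q : Hom B Q} :
  is_cokernel f q -> is_coker f q.
Proof.
  intros [H1 H2]. split; [apply is_zero_morE; exact H1|].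
  intros W g Hg. apply H2, is_zero_morE. exact Hg.
Qed.

Lemma ex_prod (A B : C) :
  exists (P : C) (p1 : Hom P A) (p2 : Hom P B), is_product p1 p2.
Proof. destruct HC as (_ & H & _). apply H. Qed.

Lemma ex_coprod (A B : C) :
  exists (S : C) (j1 : Hom A S) (j2 : Hom B S), is_coproduct j1 j2.
Proof. destruct HC as (_ & _ & H & _). apply H. Qed.

Lemma ex_ker {A B : C} (f : Hom A B) : exists (K : C) (k : Hom K A), is_ker f k.
Proof.
  destruct HC as (_ & _ & _ & H & _). destruct (H A B f) as (K & k & Hk).
  exists K, k. exact (kernel_is_ker Hk).
Qed.

Lemma ex_coker {A B : C} (f : Hom A B) : exists (Q : C) (q : Hom B Q), is_coker f q.
Proof.
  destruct HC as (_ & _ & _ & _ & H & _). destruct (H A B f) as (Q & q & Hq).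
  exists Q, q. exact (cokernel_is_coker Hq).
Qed.

Lemma mono_is_ker {A B : C} {m : Hom A B} :
  is_mono m -> exists (Q : C) (f : Hom B Q), is_ker f m.
Proof.
  destruct HC as (_ & _ & _ & _ & _ & H & _). intros Hm.
  destruct (H A B m Hm) as (Q & f & Hf). exists Q, f. exact (kernel_is_ker Hf).
Qed.

Lemma epi_is_coker {A B : C} {e : Hom A B} :
  is_epi e -> exists (K : C) (f : Hom K A), is_coker f e.
Proof.
  destruct HC as (_ & _ & _ & _ & _ & _ & H). intros He.
  destruct (H A B e He) as (K & f & Hf). exists K, f. exact (cokernel_is_coker Hf).
Qed.

Lemma ker_mono {A B K : C} {f : Hom A B} {k : Hom K A} : is_ker f k -> is_mono k.
Proof.
  intros [H1 H2] X g h E.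
  destruct (H2 X (k ∘ g)) as [x [_ U]].
  - rewrite compA, H1. apply zero_comp.
  - rewrite <- (U g eq_refl). apply U. symmetry; exact E.
Qed.

Lemma coker_epi {A B Q : C} {f : Hom A B} {q : Hom B Q} : is_coker f q -> is_epi q.
Proof.
  intros [H1 H2] X g h E.
  destruct (H2 X (g ∘ q)) as [x [_ U]].
  - rewrite <- compA, H1. apply comp_zero.
  - rewrite <- (U g eq_refl). apply U. symmetry; exact E.
Qed.

Lemma ker_factor {A B K : C} {f : Hom A B} {k : Hom K A} : is_ker f k ->
  forall W (g : Hom W A), f ∘ g = zero W B -> exists h, k ∘ h = g.
Proof. intros [_ H] W g Hg. destruct (H W g Hg) as [h [Hh _]]. exists h; exact Hh. Qed.

Lemma coker_factor {A B Q : C} {f : Hom A B} {q : Hom B Q} : is_coker f q ->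
  forall W (g : Hom B W), g ∘ f = zero A W -> exists h, h ∘ q = g.
Proof. intros [_ H] W g Hg. destruct (H W g Hg) as [h [Hh _]]. exists h; exact Hh. Qed.

Lemma mono_ker_of_coker {A B Q : C} {m : Hom A B} {c : Hom B Q} :
  is_mono m -> is_coker m c -> is_ker c m.
Proof.
  intros Hm Hc. destruct (mono_is_ker Hm) as (Q' & f & Hf).
  destruct (coker_factor Hc _ f (proj1 Hf)) as [f' Hf'].
  split; [exact (proj1 Hc)|].
  intros W g Hg. apply (proj2 Hf). rewrite <- Hf', <- compA, Hg. apply comp_zero.
Qed.

Lemma epi_coker_of_ker {A B K : C} {e : Hom A B} {k : Hom K A} :
  is_epi e -> is_ker e k -> is_coker k e.
Proof.
  intros He Hk. destruct (epi_is_coker He) as (K' & f & Hf).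
  destruct (ker_factor Hk _ f (proj1 Hf)) as [f' Hf'].
  split; [exact (proj1 Hk)|].
  intros W g Hg. apply (proj2 Hf). rewrite <- Hf', compA, Hg. apply zero_comp.
Qed.

(** * Products, coproducts and biproducts *)

Section Product.
Context {A B P : C} {p1 : Hom P A} {p2 : Hom P B} (HP : is_product p1 p2).

Definition pairing {W : C} (g1 : Hom W A) (g2 : Hom W B) : Hom W P :=
  proj1_sig (constructive_indefinite_description _ (HP W g1 g2)).

Lemma pairing_1 {W : C} (g1 : Hom W A) (g2 : Hom W B) : p1 ∘ pairing g1 g2 = g1.
Proof. exact (proj1 (proj1 (proj2_sig (constructive_indefinite_description _ (HP W g1 g2))))). Qed.

Lemma pairing_2 {W : C} (g1 : Hom W A) (g2 : Hom W B) : p2 ∘ pairing g1 g2 = g2.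
Proof. exact (proj2 (proj1 (proj2_sig (constructive_indefinite_description _ (HP W g1 g2))))). Qed.

Lemma prod_ext {W : C} (x y : Hom W P) : p1 ∘ x = p1 ∘ y -> p2 ∘ x = p2 ∘ y -> x = y.
Proof.
  intros E1 E2. destruct (HP W (p1 ∘ x) (p2 ∘ x)) as [h [_ U]].
  rewrite <- (U x (conj eq_refl eq_refl)). apply U. split; symmetry; assumption.
Qed.

Lemma pairing_comp {W V : C} (g1 : Hom W A) (g2 : Hom W B) (k : Hom V W) :
  pairing g1 g2 ∘ k = pairing (g1 ∘ k) (g2 ∘ k).
Proof. apply prod_ext; rewrite compA; rewrite ?pairing_1, ?pairing_2; reflexivity. Qed.

Definition inj1 : Hom A P := pairing (idm A) (zero A B).
Definition inj2 : Hom B P := pairing (zero B A) (idm B).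

Lemma proj1_inj1 : p1 ∘ inj1 = idm A. Proof. apply pairing_1. Qed.
Lemma proj2_inj1 : p2 ∘ inj1 = zero A B. Proof. apply pairing_2. Qed.
Lemma proj1_inj2 : p1 ∘ inj2 = zero B A. Proof. apply pairing_1. Qed.
Lemma proj2_inj2 : p2 ∘ inj2 = idm B. Proof. apply pairing_2. Qed.

End Product.

Section Coproduct.
Context {A B S : C} {j1 : Hom A S} {j2 : Hom B S} (HS : is_coproduct j1 j2).

Definition copairing {W : C} (g1 : Hom A W) (g2 : Hom B W) : Hom S W :=
  proj1_sig (constructive_indefinite_description _ (HS W g1 g2)).

Lemma copairing_1 {W : C} (g1 : Hom A W) (g2 : Hom B W) : copairing g1 g2 ∘ j1 = g1.
Proof. exact (proj1 (proj1 (proj2_sig (constructive_indefinite_description _ (HS W g1 g2))))). Qed.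

Lemma copairing_2 {W : C} (g1 : Hom A W) (g2 : Hom B W) : copairing g1 g2 ∘ j2 = g2.
Proof. exact (proj2 (proj1 (proj2_sig (constructive_indefinite_description _ (HS W g1 g2))))). Qed.

Lemma coprod_ext {W : C} (x y : Hom S W) : x ∘ j1 = y ∘ j1 -> x ∘ j2 = y ∘ j2 -> x = y.
Proof.
  intros E1 E2. destruct (HS W (x ∘ j1) (x ∘ j2)) as [h [_ U]].
  rewrite <- (U x (conj eq_refl eq_refl)). apply U. split; symmetry; assumption.
Qed.

End Coproduct.

(* [x] and [y] agree iff [copairing x y] factors through the codiagonal, an
   epi and hence the cokernel of its kernel. *)
Lemma ker0_mono {A B : C} (m : Hom A B) :
  (forall W (x : Hom W A), m ∘ x = zero W B -> x = zero W A) -> is_mono m.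
Proof.
  intros H0 W x y E.
  destruct (ex_coprod W W) as (S & j1 & j2 & HS).
  set (nabla := copairing HS (idm W) (idm W)).
  assert (Hnabla : is_epi nabla) by (apply (split_epi _ j1), copairing_1).
  destruct (ex_ker nabla) as (K & k & Hk).
  pose proof (epi_coker_of_ker Hnabla Hk) as Hc.
  set (xy := copairing HS x y).
  assert (Emxy : m ∘ xy = (m ∘ x) ∘ nabla).
  { apply (coprod_ext HS); rewrite <- !compA; unfold xy, nabla;
      rewrite ?copairing_1, ?copairing_2, ?comp_idr; auto. }
  assert (Exyk : xy ∘ k = zero K A).
  { apply H0. rewrite compA, Emxy, <- compA, (proj1 Hk). apply comp_zero. }
  destruct (coker_factor Hc _ xy Exyk) as [t Ht].
  transitivity t.
  - rewrite <- (comp_idr t), <- (copairing_1 HS (idm W) (idm W)), compA.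
    fold nabla. rewrite Ht. symmetry. apply copairing_1.
  - rewrite <- (comp_idr t), <- (copairing_2 HS (idm W) (idm W)), compA.
    fold nabla. rewrite Ht. apply copairing_2.
Qed.

(* Dually, through the diagonal, the kernel of its cokernel. *)
Lemma coker0_epi {A B : C} (e : Hom A B) :
  (forall X (x : Hom B X), x ∘ e = zero A X -> x = zero B X) -> is_epi e.
Proof.
  intros H0 X x y E.
  destruct (ex_prod X X) as (P & p1 & p2 & HP).
  set (delta := pairing HP (idm X) (idm X)).
  assert (Hdelta : is_mono delta) by (apply (split_mono _ p1), pairing_1).
  destruct (ex_coker delta) as (K & k & Hk).
  pose proof (mono_ker_of_coker Hdelta Hk) as Hc.
  set (xy := pairing HP x y).
  assert (Exye : xy ∘ e = delta ∘ (x ∘ e)).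
  { apply (prod_ext HP); rewrite !compA; unfold xy, delta;
      rewrite ?pairing_1, ?pairing_2, ?comp_idl; auto. }
  assert (Ekxy : k ∘ xy = zero B K).
  { apply H0. rewrite <- compA, Exye, compA, (proj1 Hk). apply zero_comp. }
  destruct (ker_factor Hc _ xy Ekxy) as [t Ht].
  transitivity t.
  - rewrite <- (comp_idl t), <- (pairing_1 HP (idm X) (idm X)), <- compA.
    fold delta. rewrite Ht. symmetry. apply pairing_1.
  - rewrite <- (comp_idl t), <- (pairing_2 HP (idm X) (idm X)), <- compA.
    fold delta. rewrite Ht. apply pairing_2.
Qed.

Lemma mono_epi_iso {A B : C} {m : Hom A B} : is_mono m -> is_epi m ->
  exists s : Hom B A, m ∘ s = idm B /\ s ∘ m = idm A.
Proof.
  intros Hm He. destruct (ex_coker m) as (Q & c & Hc).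
  pose proof (mono_ker_of_coker Hm Hc) as Hk.
  assert (c = zero B Q).
  { apply He. rewrite (proj1 Hc). symmetry; apply zero_comp. }
  destruct (ker_factor Hk _ (idm B)) as [s Hs]. { rewrite comp_idr. assumption. }
  exists s. split; [exact Hs|]. apply Hm. rewrite compA, Hs, comp_idl, comp_idr.
  reflexivity.
Qed.

Section Biproduct.
Context {A B P : C} {p1 : Hom P A} {p2 : Hom P B} (HP : is_product p1 p2).

(* [p1] is a split epi whose kernel is [inj2], hence its cokernel. *)
Lemma prod_inj_zero {X : C} (x : Hom P X) :
  x ∘ inj1 HP = zero A X -> x ∘ inj2 HP = zero B X -> x = zero P X.
Proof.
  intros E1 E2.
  assert (He : is_epi p1) by (apply (split_epi _ (inj1 HP)), proj1_inj1).
  assert (Hk : is_ker p1 (inj2 HP)).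
  { split; [apply proj1_inj2|]. intros W g Hg. exists (p2 ∘ g). split.
    - apply (prod_ext HP); rewrite compA;
        [rewrite proj1_inj2, zero_comp, Hg | rewrite proj2_inj2, comp_idl]; reflexivity.
    - intros h' Hh'. rewrite <- Hh', compA, proj2_inj2, comp_idl. reflexivity. }
  destruct (coker_factor (epi_coker_of_ker He Hk) _ x E2) as [y Hy].
  assert (Ey : y = zero A X).
  { rewrite <- E1, <- Hy, <- compA, proj1_inj1, comp_idr. reflexivity. }
  rewrite <- Hy, Ey. apply zero_comp.
Qed.

Lemma coprod_to_prod_epi {S : C} {j1 : Hom A S} {j2 : Hom B S} (HS : is_coproduct j1 j2) :
  is_epi (copairing HS (inj1 HP) (inj2 HP)).
Proof.
  apply coker0_epi. intros X x Hx. apply prod_inj_zero.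
  - rewrite <- (copairing_1 HS (inj1 HP) (inj2 HP)), compA, Hx. apply zero_comp.
  - rewrite <- (copairing_2 HS (inj1 HP) (inj2 HP)), compA, Hx. apply zero_comp.
Qed.

Lemma prod_inj_ext {X : C} (g h : Hom P X) :
  g ∘ inj1 HP = h ∘ inj1 HP -> g ∘ inj2 HP = h ∘ inj2 HP -> g = h.
Proof.
  intros E1 E2. destruct (ex_coprod A B) as (S & j1 & j2 & HS).
  apply (coprod_to_prod_epi HS), (coprod_ext HS);
    rewrite <- !compA; rewrite ?copairing_1, ?copairing_2; assumption.
Qed.

(* Dual to [prod_inj_zero]. *)
Lemma coprod_proj_zero {S : C} {j1 : Hom A S} {j2 : Hom B S} (HS : is_coproduct j1 j2)
    {W : C} (x : Hom W S) :
  copairing HS (idm A) (zero B A) ∘ x = zero W A ->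
  copairing HS (zero A B) (idm B) ∘ x = zero W B -> x = zero W S.
Proof.
  intros E1 E2.
  set (pi1 := copairing HS (idm A) (zero B A)).
  set (pi2 := copairing HS (zero A B) (idm B)).
  assert (Hm : is_mono j1) by (apply (split_mono _ pi1), copairing_1).
  assert (Hc : is_coker j1 pi2).
  { split; [apply copairing_1|]. intros V g Hg. exists (g ∘ j2). split.
    - apply (coprod_ext HS); rewrite <- compA; unfold pi2;
        [rewrite copairing_1, comp_zero, Hg | rewrite copairing_2, comp_idr]; reflexivity.
    - intros h' Hh'. rewrite <- Hh', <- compA. unfold pi2.
      rewrite copairing_2, comp_idr. reflexivity. }
  destruct (ker_factor (mono_ker_of_coker Hm Hc) _ x E2) as [y Hy].
  assert (Ey : y = zero W A).
  { rewrite <- E1, <- Hy, compA. unfold pi1. rewrite copairing_1, comp_idl. reflexivity. }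
  rewrite <- Hy, Ey. apply comp_zero.
Qed.

Lemma coprod_to_prod_mono {S : C} {j1 : Hom A S} {j2 : Hom B S} (HS : is_coproduct j1 j2) :
  is_mono (copairing HS (inj1 HP) (inj2 HP)).
Proof.
  set (theta := copairing HS (inj1 HP) (inj2 HP)).
  assert (E1 : copairing HS (idm A) (zero B A) = p1 ∘ theta).
  { apply (coprod_ext HS); rewrite <- compA; unfold theta;
      rewrite ?copairing_1, ?copairing_2, ?proj1_inj1, ?proj1_inj2; reflexivity. }
  assert (E2 : copairing HS (zero A B) (idm B) = p2 ∘ theta).
  { apply (coprod_ext HS); rewrite <- compA; unfold theta;
      rewrite ?copairing_1, ?copairing_2, ?proj2_inj1, ?proj2_inj2; reflexivity. }
  apply ker0_mono. intros W x Hx. apply (coprod_proj_zero HS).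
  - rewrite E1, <- compA, Hx. apply comp_zero.
  - rewrite E2, <- compA, Hx. apply comp_zero.
Qed.

Lemma prod_copairing {X : C} (f : Hom A X) (g : Hom B X) :
  exists h : Hom P X, h ∘ inj1 HP = f /\ h ∘ inj2 HP = g.
Proof.
  destruct (ex_coprod A B) as (S & j1 & j2 & HS).
  destruct (mono_epi_iso (coprod_to_prod_mono HS) (coprod_to_prod_epi HS))
    as [s [_ Hs]].
  exists (copairing HS f g ∘ s). split.
  - rewrite <- (copairing_1 HS (inj1 HP) (inj2 HP)), <- compA, (compA s), Hs, comp_idl.
    apply copairing_1.
  - rewrite <- (copairing_2 HS (inj1 HP) (inj2 HP)), <- compA, (compA s), Hs, comp_idl.
    apply copairing_2.
Qed.

End Biproduct.

(** * The additive structure on morphisms *)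

Definition sq_prod (B : C) :
  {P : C & {p1 : Hom P B & {p2 : Hom P B | is_product p1 p2}}}.
Proof.
  destruct (constructive_indefinite_description _ (ex_prod B B)) as [P HP].
  destruct (constructive_indefinite_description _ HP) as [p1 Hp1].
  destruct (constructive_indefinite_description _ Hp1) as [p2 Hp2].
  exact (existT _ P (existT _ p1 (exist _ p2 Hp2))).
Defined.

Definition sq (B : C) : C := projT1 (sq_prod B).
Definition sq1 (B : C) : Hom (sq B) B := projT1 (projT2 (sq_prod B)).
Definition sq2 (B : C) : Hom (sq B) B := proj1_sig (projT2 (projT2 (sq_prod B))).
Definition sqP (B : C) : is_product (sq1 B) (sq2 B) := proj2_sig (projT2 (projT2 (sq_prod B))).

Definition codiag (B : C) : Hom (sq B) B :=
  proj1_sig (constructive_indefinite_description _ (prod_copairing (sqP B) (idm B) (idm B))).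

Lemma codiag_inj1 (B : C) : codiag B ∘ inj1 (sqP B) = idm B.
Proof.
  exact (proj1 (proj2_sig
    (constructive_indefinite_description _ (prod_copairing (sqP B) (idm B) (idm B))))).
Qed.

Lemma codiag_inj2 (B : C) : codiag B ∘ inj2 (sqP B) = idm B.
Proof.
  exact (proj2 (proj2_sig
    (constructive_indefinite_description _ (prod_copairing (sqP B) (idm B) (idm B))))).
Qed.

Definition add {A B : C} (x y : Hom A B) : Hom A B := codiag B ∘ pairing (sqP B) x y.

Lemma pairing_x0 {A B : C} (x : Hom A B) : pairing (sqP B) x (zero A B) = inj1 (sqP B) ∘ x.
Proof.
  apply (prod_ext (sqP B)); rewrite ?pairing_1, ?pairing_2, compA;
    rewrite ?proj1_inj1, ?proj2_inj1, ?comp_idl, ?zero_comp; reflexivity.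
Qed.

Lemma pairing_0x {A B : C} (x : Hom A B) : pairing (sqP B) (zero A B) x = inj2 (sqP B) ∘ x.
Proof.
  apply (prod_ext (sqP B)); rewrite ?pairing_1, ?pairing_2, compA;
    rewrite ?proj1_inj2, ?proj2_inj2, ?comp_idl, ?zero_comp; reflexivity.
Qed.

Lemma addr0 {A B : C} (x : Hom A B) : add x (zero A B) = x.
Proof. unfold add. rewrite pairing_x0, compA, codiag_inj1, comp_idl. reflexivity. Qed.

Lemma add0r {A B : C} (x : Hom A B) : add (zero A B) x = x.
Proof. unfold add. rewrite pairing_0x, compA, codiag_inj2, comp_idl. reflexivity. Qed.

Lemma add_compl {A B D : C} (x y : Hom A B) (h : Hom D A) :
  add x y ∘ h = add (x ∘ h) (y ∘ h).
Proof. unfold add. rewrite <- compA, pairing_comp. reflexivity. Qed.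

Lemma addC {A B : C} (x y : Hom A B) : add x y = add y x.
Proof.
  unfold add. set (swap := pairing (sqP B) (sq2 B) (sq1 B)).
  assert (Eswap : pairing (sqP B) y x = swap ∘ pairing (sqP B) x y).
  { unfold swap. rewrite pairing_comp, pairing_1, pairing_2. reflexivity. }
  assert (Ecodiag : codiag B ∘ swap = codiag B).
  { apply (prod_inj_ext (sqP B)); rewrite <- compA; unfold swap; rewrite pairing_comp.
    - rewrite proj1_inj1, proj2_inj1, pairing_0x, compA, codiag_inj1, codiag_inj2, comp_idl.
      reflexivity.
    - rewrite proj1_inj2, proj2_inj2, pairing_x0, compA, codiag_inj1, codiag_inj2, comp_idl.
      reflexivity. }
  rewrite Eswap, compA, Ecodiag. reflexivity.
Qed.

Lemma add_compr {A B D : C} (x y : Hom A B) (h : Hom B D) :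
  h ∘ add x y = add (h ∘ x) (h ∘ y).
Proof.
  unfold add. set (hh := pairing (sqP D) (h ∘ sq1 B) (h ∘ sq2 B)).
  assert (E : h ∘ codiag B = codiag D ∘ hh).
  { apply (prod_inj_ext (sqP B)); rewrite <- !compA; unfold hh; rewrite pairing_comp, <- !compA.
    - rewrite proj1_inj1, proj2_inj1, comp_idr, comp_zero, pairing_x0, codiag_inj1, compA,
        codiag_inj1, comp_idl, comp_idr. reflexivity.
    - rewrite proj1_inj2, proj2_inj2, comp_idr, comp_zero, pairing_0x, codiag_inj2, compA,
        codiag_inj2, comp_idl, comp_idr. reflexivity. }
  rewrite compA, E, <- compA. f_equal.
  unfold hh. rewrite pairing_comp, <- !compA, pairing_1, pairing_2. reflexivity.
Qed.

Lemma addA {A B : C} (x y z : Hom A B) : add (add x y) z = add x (add y z).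
Proof.
  destruct (ex_prod (sq B) B) as (T & t1 & t2 & HT).
  set (w := pairing HT (pairing (sqP B) x y) z).
  set (x' := sq1 B ∘ t1). set (y' := sq2 B ∘ t1).
  assert (Ex : x = x' ∘ w). { unfold x', w. rewrite <- compA, !pairing_1. reflexivity. }
  assert (Ey : y = y' ∘ w). { unfold y', w. rewrite <- compA, pairing_1, pairing_2. reflexivity. }
  assert (Ez : z = t2 ∘ w). { unfold w. rewrite pairing_2. reflexivity. }
  assert (E : add (add x' y') t2 = add x' (add y' t2)).
  { unfold x', y'. apply (prod_inj_ext HT); rewrite !add_compl, <- !compA.
    - rewrite proj1_inj1, proj2_inj1, comp_idr, !addr0. reflexivity.
    - rewrite proj1_inj2, proj2_inj2, !comp_zero, addr0, !add0r. reflexivity. }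
  rewrite Ex, Ey, Ez, <- !add_compl, E. reflexivity.
Qed.

(* Additive inverses come from inverting the shear map (a, b) |-> (a, a + b). *)
Definition shear (B : C) : Hom (sq B) (sq B) :=
  pairing (sqP B) (sq1 B) (add (sq1 B) (sq2 B)).

Lemma shear_mono (B : C) : is_mono (shear B).
Proof.
  apply ker0_mono. intros W x Hx.
  assert (E1 : sq1 B ∘ x = zero W B).
  { unfold shear in Hx.
    rewrite <- (pairing_1 (sqP B) (sq1 B) (add (sq1 B) (sq2 B))), <- compA, Hx.
    apply comp_zero. }
  assert (E2 : add (sq1 B ∘ x) (sq2 B ∘ x) = zero W B).
  { rewrite <- add_compl. unfold shear in Hx.
    rewrite <- (pairing_2 (sqP B) (sq1 B) (add (sq1 B) (sq2 B))), <- compA, Hx.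
    apply comp_zero. }
  rewrite E1, add0r in E2.
  apply (prod_ext (sqP B)); rewrite comp_zero; assumption.
Qed.

Lemma shear_epi (B : C) : is_epi (shear B).
Proof.
  apply coker0_epi. intros X y Hy.
  assert (E1 : shear B ∘ inj1 (sqP B) = add (inj1 (sqP B)) (inj2 (sqP B))).
  { unfold shear. rewrite pairing_comp, add_compl.
    apply (prod_ext (sqP B)); rewrite ?pairing_1, ?pairing_2, !add_compr,
      ?proj1_inj1, ?proj1_inj2, ?proj2_inj1, ?proj2_inj2, ?addr0, ?add0r; reflexivity. }
  assert (E2 : shear B ∘ inj2 (sqP B) = inj2 (sqP B)).
  { unfold shear. rewrite pairing_comp, add_compl.
    apply (prod_ext (sqP B)); rewrite ?pairing_1, ?pairing_2,
      ?proj1_inj1, ?proj1_inj2, ?proj2_inj1, ?proj2_inj2, ?addr0, ?add0r; reflexivity. }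
  assert (Y2 : y ∘ inj2 (sqP B) = zero B X).
  { rewrite <- E2, compA, Hy. apply zero_comp. }
  apply (prod_inj_zero (sqP B)); [|exact Y2].
  transitivity (y ∘ add (inj1 (sqP B)) (inj2 (sqP B))).
  { rewrite add_compr, Y2, addr0. reflexivity. }
  rewrite <- E1, compA, Hy. apply zero_comp.
Qed.

Definition shear_inv (B : C) : Hom (sq B) (sq B) :=
  proj1_sig (constructive_indefinite_description _
    (mono_epi_iso (shear_mono B) (shear_epi B))).

Lemma shear_invK (B : C) : shear B ∘ shear_inv B = idm (sq B).
Proof.
  exact (proj1 (proj2_sig (constructive_indefinite_description _
    (mono_epi_iso (shear_mono B) (shear_epi B))))).
Qed.

Definition neg_id (B : C) : Hom B B := sq2 B ∘ (shear_inv B ∘ inj1 (sqP B)).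

Lemma add_neg_id (B : C) : add (idm B) (neg_id B) = zero B B.
Proof.
  assert (F1 : sq1 B ∘ shear_inv B = sq1 B).
  { transitivity ((sq1 B ∘ shear B) ∘ shear_inv B).
    { unfold shear; rewrite pairing_1; reflexivity. }
    rewrite <- compA, shear_invK, comp_idr; reflexivity. }
  assert (F2 : add (sq1 B) (sq2 B) ∘ shear_inv B = sq2 B).
  { transitivity ((sq2 B ∘ shear B) ∘ shear_inv B).
    { unfold shear; rewrite pairing_2; reflexivity. }
    rewrite <- compA, shear_invK, comp_idr; reflexivity. }
  transitivity (add (sq1 B ∘ (shear_inv B ∘ inj1 (sqP B)))
                    (sq2 B ∘ (shear_inv B ∘ inj1 (sqP B)))).
  { unfold neg_id. rewrite (compA (sq1 B) (shear_inv B)), F1, proj1_inj1. reflexivity. }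
  rewrite <- add_compl, compA, F2, proj2_inj1. reflexivity.
Qed.

Definition opp {A B : C} (x : Hom A B) : Hom A B := neg_id B ∘ x.

Definition sub {A B : C} (x y : Hom A B) : Hom A B := add x (opp y).

Lemma addrN {A B : C} (x : Hom A B) : add x (opp x) = zero A B.
Proof.
  transitivity (add (idm B) (neg_id B) ∘ x).
  { rewrite add_compl, comp_idl. reflexivity. }
  rewrite add_neg_id. apply zero_comp.
Qed.

Lemma addNr {A B : C} (x : Hom A B) : add (opp x) x = zero A B.
Proof. rewrite addC. apply addrN. Qed.

Lemma opp_unique {A B : C} (a b : Hom A B) : add a b = zero A B -> b = opp a.
Proof.
  intros E. rewrite <- (addr0 b), <- (addrN a), <- addA, (addC b a), E, add0r.
  reflexivity.
Qed.

Lemma oppK {A B : C} (a : Hom A B) : opp (opp a) = a.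
Proof. symmetry. apply opp_unique, addNr. Qed.

Lemma opp_eq0 {A B : C} (a : Hom A B) : opp a = zero A B -> a = zero A B.
Proof. intros E. rewrite <- (oppK a), E. apply comp_zero. Qed.

Lemma comp_oppr {A B D : C} (x : Hom A B) (h : Hom B D) : h ∘ opp x = opp (h ∘ x).
Proof.
  assert (E : h ∘ neg_id B = neg_id D ∘ h).
  { apply opp_unique. rewrite <- (comp_idr h) at 1.
    rewrite <- add_compr, add_neg_id. apply comp_zero. }
  unfold opp. rewrite compA, E, <- compA. reflexivity.
Qed.

Lemma sub_compl {A B D : C} (x y : Hom A B) (h : Hom D A) : sub x y ∘ h = sub (x ∘ h) (y ∘ h).
Proof. unfold sub, opp. rewrite add_compl, <- compA. reflexivity. Qed.

Lemma sub_compr {A B D : C} (x y : Hom A B) (h : Hom B D) : h ∘ sub x y = sub (h ∘ x) (h ∘ y).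
Proof. unfold sub. rewrite add_compr, comp_oppr. reflexivity. Qed.

Lemma subrr {A B : C} (a : Hom A B) : sub a a = zero A B.
Proof. apply addrN. Qed.

Lemma sub0r {A B : C} (a : Hom A B) : sub (zero A B) a = opp a.
Proof. apply add0r. Qed.

Lemma subr0 {A B : C} (a : Hom A B) : sub a (zero A B) = a.
Proof. unfold sub, opp. rewrite comp_zero. apply addr0. Qed.

Lemma subr0_eq {A B : C} (a b : Hom A B) : sub a b = zero A B -> a = b.
Proof. intros E. apply opp_unique in E. rewrite <- (oppK a), <- E, oppK. reflexivity. Qed.

Lemma sub_swap {A B : C} (a b c : Hom A B) : sub a b = c -> sub a c = b.
Proof.
  intros E.
  assert (Ea : a = add c b).
  { rewrite <- E. unfold sub. rewrite addA, addNr, addr0. reflexivity. }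
  rewrite Ea. unfold sub. rewrite (addC c b), addA, addrN, addr0. reflexivity.
Qed.

(** * Pullbacks and chasing generalized elements *)

Lemma ex_pullback {A B M : C} (f : Hom A M) (g : Hom B M) :
  exists (P : C) (pA : Hom P A) (pB : Hom P B), is_pullback f g pA pB.
Proof.
  destruct (ex_prod A B) as (T & s1 & s2 & HT).
  destruct (ex_ker (sub (f ∘ s1) (g ∘ s2))) as (K & k & Hk).
  exists K, (s1 ∘ k), (s2 ∘ k). split.
  - apply subr0_eq. rewrite !compA, <- sub_compl. exact (proj1 Hk).
  - intros W w1 w2 E.
    destruct (proj2 Hk W (pairing HT w1 w2)) as [h [Hh U]].
    { rewrite sub_compl, <- !compA, pairing_1, pairing_2, E. apply subrr. }
    exists h. split.
    + rewrite <- !compA, Hh, pairing_1, pairing_2. split; reflexivity.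
    + intros h' [H1 H2]. apply U, (prod_ext HT); rewrite compA;
        rewrite ?pairing_1, ?pairing_2; assumption.
Qed.

Lemma pullback_ext {A B M P : C} {f : Hom A M} {g : Hom B M} {pA : Hom P A} {pB : Hom P B}
    (H : is_pullback f g pA pB) {W : C} (x y : Hom W P) :
  pA ∘ x = pA ∘ y -> pB ∘ x = pB ∘ y -> x = y.
Proof.
  intros E1 E2. destruct (proj2 H W (pA ∘ x) (pB ∘ x)) as [h [_ U]].
  { rewrite !compA, (proj1 H). reflexivity. }
  rewrite <- (U x (conj eq_refl eq_refl)). apply U. split; symmetry; assumption.
Qed.

(* [f s1 - g s2 : A x B -> M] is epi; the pullback contains its kernel, of
   which it is the cokernel. *)
Lemma epi_pullback {A B M P : C} {f : Hom A M} {g : Hom B M} {pA : Hom P A} {pB : Hom P B}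
    (H : is_pullback f g pA pB) : is_epi g -> is_epi pA.
Proof.
  intros Hg. apply coker0_epi. intros X y Hy.
  destruct (ex_prod A B) as (T & s1 & s2 & HT).
  set (phi := sub (f ∘ s1) (g ∘ s2)).
  assert (Ephi : phi ∘ inj2 HT = opp g).
  { unfold phi. rewrite sub_compl, <- !compA, proj1_inj2, proj2_inj2, comp_zero, comp_idr.
    apply sub0r. }
  assert (Hphi : is_epi phi).
  { apply coker0_epi. intros Y r Hr. apply Hg. rewrite zero_comp. apply opp_eq0.
    rewrite <- comp_oppr, <- Ephi, compA, Hr. apply zero_comp. }
  destruct (ex_ker phi) as (K & k & Hk).
  assert (Ek : y ∘ s1 ∘ k = zero K X).
  { destruct (proj2 H K (s1 ∘ k) (s2 ∘ k)) as [h [[H1 _] _]].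
    { apply subr0_eq. rewrite !compA, <- sub_compl. exact (proj1 Hk). }
    rewrite <- compA, <- H1, compA, Hy. apply zero_comp. }
  destruct (coker_factor (epi_coker_of_ker Hphi Hk) _ _ Ek) as [r Hr].
  assert (Er : r = zero M X).
  { apply Hg. rewrite zero_comp. apply opp_eq0.
    rewrite <- comp_oppr, <- Ephi, compA, Hr, <- compA, proj1_inj2. apply comp_zero. }
  rewrite Er, zero_comp in Hr.
  rewrite <- (comp_idr y), <- (proj1_inj1 HT), compA, <- Hr. apply zero_comp.
Qed.

Lemma lift_along_epi {A B Q : C} (e : Hom A B) (q : Hom Q B) : is_epi e ->
  exists (T : C) (t : Hom T Q) (x : Hom T A), is_epi t /\ e ∘ x = q ∘ t.
Proof.
  intros He. destruct (ex_pullback q e) as (T & t & x & Hpb).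
  exists T, t, x. split; [exact (epi_pullback Hpb He) | symmetry; exact (proj1 Hpb)].
Qed.

Lemma lift_pair_along_epis {A1 A2 B1 B2 Q : C} (e1 : Hom A1 B1) (e2 : Hom A2 B2)
    (q1 : Hom Q B1) (q2 : Hom Q B2) : is_epi e1 -> is_epi e2 ->
  exists (T : C) (t : Hom T Q) (x1 : Hom T A1) (x2 : Hom T A2),
    is_epi t /\ e1 ∘ x1 = q1 ∘ t /\ e2 ∘ x2 = q2 ∘ t.
Proof.
  intros He1 He2.
  destruct (lift_along_epi e1 q1 He1) as (T1 & t1 & x1 & Ht1 & E1).
  destruct (lift_along_epi e2 (q2 ∘ t1) He2) as (T2 & t2 & x2 & Ht2 & E2).
  exists T2, (t1 ∘ t2), (x1 ∘ t2), x2. repeat split.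
  - apply epi_comp; assumption.
  - rewrite !compA, E1. reflexivity.
  - rewrite E2, compA. reflexivity.
Qed.

Lemma epi_onto_image {Z M Q K : C} {g : Hom Z M} {c : Hom M Q} {k : Hom K M} (e : Hom Z K) :
  is_coker g c -> is_ker c k -> k ∘ e = g -> is_epi e.
Proof.
  intros Hc Hk Ee. apply coker0_epi. intros X s Hs.
  destruct (ex_ker s) as (I & m & Hm).
  destruct (ker_factor Hm _ e Hs) as [e' He'].
  assert (Hkm : is_mono (k ∘ m)) by (apply mono_comp; [exact (ker_mono Hk) | exact (ker_mono Hm)]).
  destruct (ex_coker (k ∘ m)) as (D & d & Hd).
  assert (Edg : d ∘ g = zero Z D).
  { rewrite <- Ee, <- He', (compA k m e'), (compA d (k ∘ m) e'), (proj1 Hd).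
    apply zero_comp. }
  destruct (coker_factor Hc _ d Edg) as [d' Hd'].
  destruct (ker_factor (mono_ker_of_coker Hkm Hd) _ k) as [n Hn].
  { rewrite <- Hd', <- compA, (proj1 Hk). apply comp_zero. }
  assert (Emn : m ∘ n = idm K).
  { apply (ker_mono Hk). rewrite comp_idr, compA. exact Hn. }
  rewrite <- (comp_idr s), <- Emn, compA, (proj1 Hm). apply zero_comp.
Qed.

Lemma coker_annihilated_lift {Z M Q : C} {g : Hom Z M} {c : Hom M Q} : is_coker g c ->
  forall T (h : Hom T M), c ∘ h = zero T Q ->
  exists (T' : C) (t : Hom T' T) (z : Hom T' Z), is_epi t /\ h ∘ t = g ∘ z.
Proof.
  intros Hc T h Hh.
  destruct (ex_ker c) as (K & k & Hk).
  destruct (ker_factor Hk _ h Hh) as [h' Hh'].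
  destruct (ker_factor Hk _ g (proj1 Hc)) as [e He].
  destruct (lift_along_epi e h' (epi_onto_image e Hc Hk He)) as (T' & t & z & Ht & Ez).
  exists T', t, z. split; [exact Ht|].
  rewrite <- Hh', <- He, <- !compA, Ez. reflexivity.
Qed.

Lemma pullback_lift_modulo_image {L M R P Z CM T : C} {l2 : Hom L M} {r2 : Hom R M}
    {l1 : Hom P L} {r1 : Hom P R} (Hpb : is_pullback l2 r2 l1 r1)
    {g : Hom Z L} {cM : Hom M CM} (HcM : is_coker (l2 ∘ g) cM)
    (x : Hom T L) (y : Hom T R) : cM ∘ (l2 ∘ x) = cM ∘ (r2 ∘ y) ->
  exists (T' : C) (s : Hom T' T) (p : Hom T' P) (z : Hom T' Z),
    is_epi s /\ l1 ∘ p = sub (x ∘ s) (g ∘ z) /\ r1 ∘ p = y ∘ s.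
Proof.
  intros Exy.
  assert (Hh : cM ∘ sub (l2 ∘ x) (r2 ∘ y) = zero T CM).
  { rewrite sub_compr, Exy. apply subrr. }
  destruct (coker_annihilated_lift HcM _ _ Hh) as (T' & s & z & Hs & Ez).
  assert (Ep : l2 ∘ sub (x ∘ s) (g ∘ z) = r2 ∘ (y ∘ s)).
  { rewrite sub_compr. apply sub_swap. rewrite sub_compl, <- !compA in Ez.
    exact Ez. }
  destruct (proj2 Hpb T' _ _ Ep) as [p [[Hp1 Hp2] _]].
  exists T', s, p, z. repeat split; assumption.
Qed.

End AbelianCategory.

Theorem lemma2p11 (C : Category) (HC : is_abelian C)
  (L M R : C) (l2 : Hom L M) (r2 : Hom R M)
  (P : C) (l1 : Hom P L) (r1 : Hom P R) (Hpb : is_pullback l2 r2 l1 r1)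
  (Z : C) (f : Hom Z P)
  (Cf : C) (cf : Hom P Cf) (Hcf : is_cokernel f cf)
  (CL : C) (cL : Hom L CL) (HcL : is_cokernel (comp l1 f) cL)
  (CR : C) (cR : Hom R CR) (HcR : is_cokernel (comp r1 f) cR)
  (CM : C) (cM : Hom M CM) (HcM : is_cokernel (comp l2 (comp l1 f)) cM)
  (l2s : Hom CL CM) (Hl2s : comp l2s cL = comp cM l2)
  (r2s : Hom CR CM) (Hr2s : comp r2s cR = comp cM r2)
  (a : Hom Cf CL) (Ha : comp a cf = comp cL l1)
  (b : Hom Cf CR) (Hb : comp b cf = comp cR r1)
  (Q : C) (q1 : Hom Q CL) (q2 : Hom Q CR) (Hq : is_pullback l2s r2s q1 q2)
  (u : Hom Cf Q) (Hu1 : comp q1 u = a) (Hu2 : comp q2 u = b) :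
  is_epi u.
Proof.
  pose proof (cokernel_is_coker HC HcL) as HcL'.
  pose proof (cokernel_is_coker HC HcR) as HcR'.
  pose proof (cokernel_is_coker HC HcM) as HcM'.
  destruct (lift_pair_along_epis HC cL cR q1 q2 (coker_epi HC HcL') (coker_epi HC HcR'))
    as (T & t & x & y & Ht & Ex & Ey).
  assert (Exy : cM ∘ (l2 ∘ x) = cM ∘ (r2 ∘ y)).
  { rewrite !compA, <- Hl2s, <- Hr2s, <- !compA, Ex, Ey, !compA, (proj1 Hq).
    reflexivity. }
  destruct (pullback_lift_modulo_image HC Hpb HcM' x y Exy)
    as (T' & s & p & z & Hs & Hp1 & Hp2).
  assert (Eu : u ∘ (cf ∘ p) = t ∘ s).
  { apply (pullback_ext Hq).
    - rewrite (compA q1 u), Hu1, (compA a cf), Ha, <- compA, Hp1, sub_compr,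
        (compA cL (l1 ∘ f)), (proj1 HcL'), zero_comp, subr0, !compA, Ex.
      reflexivity.
    - rewrite (compA q2 u), Hu2, (compA b cf), Hb, <- compA, Hp2, !compA, Ey.
      reflexivity. }
  apply (epi_compl u (cf ∘ p)). rewrite Eu. apply epi_comp; assumption.
Qed.
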